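(* Let $G^{c}$ be the graph obtained from the graph $G$ of the construction described in the context by additionally adding all edges $p_ip_{i'}$ for distinct $i,i'\in[t]$, and let $\ell=2|\mathcal{C}|+\frac{2n}{3}+1$. If $G^{c}$ has an acyclic matching of size at least $\ell$, then for some $q\in[t]$ the instance $(X,\mathcal{S}_q)$ of \textsc{Exact-3-Cover} is a Yes-instance.
   Context: Construction. Let $n=3c$ with $c\in\mathbb{N}$, $X=[n]$, and let $(X,\mathcal{S}_1),\dots,(X,\mathcal{S}_t)$ be instances of \textsc{Exact-3-Cover} (each $\mathcal{S}_i$ a collection of 3-element subsets of $X$, all $\mathcal{S}_i$ of the same size $m$ and pairwise distinct as collections). An instance $(X,\mathcal{S})$ is a Yes-instance if some subcollection of $\mathcal{S}$ covers every element of $X$ exactly once. Let $\mathcal{C}=\bigcup_{i\in[t]}\mathcal{S}_i=\{s_1,\dots,s_{|\mathcal{C}|}\}$ (distinct 3-sets). The graph $G$: a vertex set $X'=\{v_a:a\in X\}$; for each $s_j=\{a,b,c\}\in\mathcal{C}$ a set gadget $Q_j$ with vertices $u_{ja},u_{jb},u_{jc}$ (interface vertices), $u_j,w_j,u_j',w_j'$, where each of $u_j,w_j$ is adjacent to each of $u_{ja},u_{jb},u_{jc}$, and additionally $u_jw_j,u_ju_j',w_jw_j'$ are edges; for each $s_j\in\mathcal{C}$ and $d\in s_j$ the edge $u_{jd}v_d$; a vertex $p$ and vertices $P=\{p_1,\dots,p_t\}$ with edges $pp_i$ for all $i$; and for each $i\in[t]$ and each $s_j\in\mathcal{C}\setminus\mathcal{S}_i$,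 edges from $p_i$ to the three interface vertices of $Q_j$. There are no other edges. A matching $M$ is acyclic if the subgraph induced by the endpoints of its edges is a forest. *)

From HB Require Import structures.
From mathcomp Require Import all_boot.
Set Implicit Arguments. Unset Strict Implicit. Unset Printing Implicit Defensive.

(* Ground set X = 'I_n. *)

(** Set gadgets are indexed by the 3-set s itself (the sets s_j of C are
    distinct, so s determines j).  Vertices indexed by sets s outside C, or
    interface vertices Vint s d with d \notin s, are isolated (no edges) and
    hence irrelevant: they can never be endpoints of matching edges. *)
Inductive vtx (n t : nat) : Type :=
| Vx of 'I_n                      (* v_a *)
| Vint of {set 'I_n} & 'I_n       (* u_{j d}, d in s_j *)
| Vu of {set 'I_n}
| Vw of {set 'I_n}
| Vu' of {set 'I_n}
| Vw' of {set 'I_n}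
| Vp
| Vpi of 'I_t.

Section VtxFin.
Variables n t : nat.
Definition vcode (x : vtx n t) :
  ('I_n + ({set 'I_n} * 'I_n)) + (({set 'I_n} * 'I_4) + option 'I_t) :=
  match x with
  | Vx a => inl (inl a)
  | Vint s d => inl (inr (s, d))
  | Vu s => inr (inl (s, @Ordinal 4 0 isT))
  | Vw s => inr (inl (s, @Ordinal 4 1 isT))
  | Vu' s => inr (inl (s, @Ordinal 4 2 isT))
  | Vw' s => inr (inl (s, @Ordinal 4 3 isT))
  | Vp => inr (inr None)
  | Vpi i => inr (inr (Some i))
  end.
Definition vdecode (c : ('I_n + ({set 'I_n} * 'I_n)) + (({set 'I_n} * 'I_4) + option 'I_t)) : vtx n t :=
  match c with
  | inl (inl a) => @Vx n t a
  | inl (inr (s, d)) => @Vint n t s d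
  | inr (inl (s, k)) =>
      match nat_of_ord k with 0 => @Vu n t s | 1 => @Vw n t s | 2 => @Vu' n t s | _ => @Vw' n t s end
  | inr (inr None) => @Vp n t
  | inr (inr (Some i)) => @Vpi n t i
  end.
Lemma vcodeK : cancel vcode vdecode. Proof. by case. Qed.
HB.instance Definition _ := Finite.copy (vtx n t) (can_type vcodeK).
End VtxFin.

Section Construction.
Variables (n t : nat) (S : 'I_t -> {set {set 'I_n}}).

Definition Cset : {set {set 'I_n}} := \bigcup_(i < t) S i.

Definition adj0 (x y : vtx n t) : bool :=
  match x, y with
  | Vu s, Vint s' d => [&& s' == s, d \in s & s \in Cset]
  | Vw s, Vint s' d => [&& s' == s, d \in s & s \in Cset]
  | Vu s, Vw s' => (s' == s) && (s \in Cset)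
  | Vu s, Vu' s' => (s' == s) && (s \in Cset)
  | Vw s, Vw' s' => (s' == s) && (s \in Cset)
  | Vint s d, Vx a => [&& a == d, d \in s & s \in Cset]
  | Vp, Vpi _ => true
  | Vpi i, Vint s d => [&& d \in s, s \in Cset & s \notin S i]
  | _, _ => false
  end.

Definition adjG (x y : vtx n t) : bool := adj0 x y || adj0 y x.

Definition adjGc (x y : vtx n t) : bool :=
  adjG x y ||
  match x, y with Vpi i, Vpi i' => i != i' | _, _ => false end.
End Construction.

Section Graphs.
Variable V : finType.

Definition is_matching (e : rel V) (M : {set {set V}}) : Prop :=
  (forall E, E \in M -> exists x y, E = [set x; y] /\ e x y) /\
  (forall E1 E2, E1 \in M -> E2 \in M -> E1 != E2 -> [disjoint E1 & E2]).

Definition induced_forest (e : rel V) (U : {set V}) : Prop :=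
  ~ exists s : seq V, [/\ 3 <= size s, uniq s, all (fun x => x \in U) s & cycle e s].

Definition acyclic_matching (e : rel V) (M : {set {set V}}) : Prop :=
  is_matching e M /\ induced_forest e (cover M).
End Graphs.

Definition exact_cover_yes (n : nat) (F : {set {set 'I_n}}) : Prop :=
  exists T : {set {set 'I_n}}, T \subset F /\
    forall a : 'I_n, #|[set s in T | a \in s]| = 1.

From HB Require Import structures.
From mathcomp Require Import all_boot zify.
Set Implicit Arguments. Unset Strict Implicit. Unset Printing Implicit Defensive.

(** Weigh the vertices of G^c: 2 on v_a, u_j, w_j, p_i and 1 on the interface
    vertices u_{jd}, on u_j', w_j' and on p.  Every edge weighs at least 3 and
    an edge p_i p_i' weighs 4, so the endpoints of a matching M weigh at least
    3|M| (+1 if M uses an edge p_i p_i').  Acyclicity forbids triangles and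
    4-cycles among the endpoints, which caps the endpoint weight of each
    region: 2n on X', 6 per gadget Q_j, 4 on {p} u P.  For |M| >= 2|C| + 2n/3
    + 1 these caps are tight up to one unit; this forces some p_q to be an
    endpoint, every v_a to be matched, and every gadget with a covered
    interface vertex to be saturated (each u_{jd} matched to v_d).  The
    gadgets with a covered interface vertex then form an exact cover of X
    inside S_q: a gadget outside S_q would close a 4-cycle p_q u_{ja} u_j u_{jb}. *)

Section AcyclicMatching.
Variables (V : finType) (e : rel V).
Hypotheses (e_irr : irreflexive e) (e_sym : symmetric e).
Variable M : {set {set V}}.
Hypothesis HM : acyclic_matching e M.
Local Notation U := (cover M).

Definition matched (x y : V) : bool := [set x; y] \in M.

Lemma adj_neq x y : e x y -> x != y.
Proof. by apply: contraTneq => ->; rewrite e_irr. Qed.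

Lemma matched_sym x y : matched x y = matched y x.
Proof. by rewrite /matched setUC. Qed.

Lemma matched_adj x y : matched x y -> e x y.
Proof.
move=> xy; have [a [b [Eab eab]]] := HM.1.1 _ xy.
have degenerate : a = b -> False by move=> Eb; rewrite Eb e_irr in eab.
have inE2 z : z \in [set a; b] = (z \in [set x; y]) by rewrite Eab.
have /set2P[] : x \in [set a; b] by rewrite inE2 set21.
all: have /set2P[] : y \in [set a; b] by rewrite inE2 set22.
all: move=> Ey Ex; subst x y => //; try by rewrite e_sym.
all: exfalso; apply: degenerate.
- by have /set2P[] : b \in [set a; a] by rewrite -inE2 set22.
- by have /set2P[] : a \in [set b; b] by rewrite -inE2 set21.
Qed.

Lemma matched_covered x y : matched x y -> x \in U.
Proof. by move=> xy; apply/bigcupP; exists [set x; y]; rewrite ?set21. Qed.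

Lemma covered_matched x : x \in U -> exists y, matched x y.
Proof.
case/bigcupP => E EM xE; have [a [b [Eab _]]] := HM.1.1 _ EM.
move: xE; rewrite Eab => /set2P[->|->]; first by exists b; rewrite /matched -Eab.
by exists a; rewrite matched_sym /matched -Eab.
Qed.

Lemma matched_uniq x y z : matched x y -> matched x z -> y = z.
Proof.
move=> xy xz; case: (eqVneq [set x; y] [set x; z]) => [Exyz|Nxyz].
  have /set2P[Ez|//] : z \in [set x; y] by rewrite Exyz set22.
  by have := adj_neq (matched_adj xz); rewrite Ez eqxx.
by have := disjointFr (HM.1.2 _ _ xy xz Nxyz) (set21 x y); rewrite set21.
Qed.

Lemma no_triangle x y z : x \in U -> y \in U -> z \in U ->
  e x y -> e y z -> e z x -> False.
Proof.
move=> xU yU zU exy eyz ezx; apply: HM.2; exists [:: x; y; z]; split => //=.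
- by rewrite !inE negb_or (adj_neq exy) (adj_neq eyz) eq_sym (adj_neq ezx).
- by rewrite xU yU zU.
- by rewrite exy eyz ezx.
Qed.

Lemma no_square x y z w : x \in U -> y \in U -> z \in U -> w \in U ->
  x != z -> y != w -> e x y -> e y z -> e z w -> e w x -> False.
Proof.
move=> xU yU zU wU nxz nyw exy eyz ezw ewx.
apply: HM.2; exists [:: x; y; z; w]; split => //=.
- rewrite !inE !negb_or (adj_neq exy) (adj_neq eyz) (adj_neq ezw) nxz nyw.
  by rewrite eq_sym (adj_neq ewx).
- by rewrite xU yU zU wU.
- by rewrite exy eyz ezw ewx.
Qed.

Lemma matching_weight (w : V -> nat) (k : nat) (heavy : bool) :
  (forall x y, e x y -> k <= w x + w y) ->
  (heavy -> exists x y, matched x y /\ k < w x + w y) ->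
  k * #|M| + heavy <= \sum_(x in U) w x.
Proof.
move=> light heavyP.
have trivM : trivIset M by apply/trivIsetP => A B AM BM; exact: HM.1.2.
have edge_wt x y : e x y -> \sum_(z in [set x; y]) w z = w x + w y.
  by move=> exy; rewrite big_setU1 ?big_set1 // inE adj_neq.
have edge_ge A : A \in M -> k <= \sum_(z in A) w z.
  by move=> AM; have [x [y [-> exy]]] := HM.1.1 _ AM; rewrite edge_wt ?light.
rewrite (big_trivIset _ trivM) /=.
case: heavy heavyP => [/(_ isT) [x [y [xy kxy]]] | _]; last first.
  by rewrite addn0 mulnC -sum_nat_const leq_sum.
rewrite /= mulnC -sum_nat_const (bigD1 [set x; y]) //=.
rewrite [X in _ <= X](bigD1 [set x; y]) //=.
rewrite addnAC edge_wt ?matched_adj // addn1.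
by apply: leq_add => //; apply: leq_sum => A /andP[AM _]; exact: edge_ge.
Qed.

End AcyclicMatching.

Lemma sum_deficit (T : finType) (G B : T -> nat) (k : nat) (x0 : T) :
  (forall x, G x <= B x) -> G x0 + k <= B x0 -> \sum_x G x + k <= \sum_x B x.
Proof.
move=> GB Gx0; rewrite (bigD1 x0) // [X in _ <= X](bigD1 x0) //= addnAC.
by apply: leq_add => //; apply: leq_sum.
Qed.

Section Construction.
Variables (c t : nat) (S : 'I_t -> {set {set 'I_(3 * c)}}).
Local Notation n := (3 * c).
Local Notation V := (vtx n t).
Local Notation e := (adjGc S).
Local Notation C := (Cset S).
Local Notation VX := (@Vx n t).
Local Notation VI := (@Vint n t).
Local Notation VU := (@Vu n t).
Local Notation VW := (@Vw n t).
Local Notation VU' := (@Vu' n t).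
Local Notation VW' := (@Vw' n t).
Local Notation VP := (@Vp n t).
Local Notation VPI := (@Vpi n t).

Definition hub (b : bool) (s : {set 'I_n}) : V := if b then VU s else VW s.
Definition pendant (b : bool) (s : {set 'I_n}) : V := if b then VU' s else VW' s.

Lemma adjGc_irr : irreflexive e.
Proof.
by case=> [a|s d|s|s|s|s||i]; rewrite /adjGc /adjG /adj0 ?orbF ?orFb ?eqxx.
Qed.

Lemma adjGc_sym : symmetric e.
Proof.
case=> [a|s d|s|s|s|s||i] [a'|s' d'|s'|s'|s'|s'||i'];
  rewrite /adjGc /adjG /adj0 ?orbF ?orFb // 1?eq_sym //; exact: orbC.
Qed.

Lemma adj_pi_pi i j : e (VPI i) (VPI j) = (i != j).
Proof. by []. Qed.

Lemma adj_p_pi i : e VP (VPI i).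
Proof. by []. Qed.

Lemma adj_pi_interface i s d :
  e (VPI i) (VI s d) = [&& d \in s, s \in C & s \notin S i].
Proof. by rewrite /adjGc /adjG /adj0 !orbF. Qed.

Lemma adj_hub_interface b s d : e (hub b s) (VI s d) = (d \in s) && (s \in C).
Proof. by case: b; rewrite /adjGc /adjG /adj0 !orbF eqxx. Qed.

Lemma adj_hubs s : e (VU s) (VW s) = (s \in C).
Proof. by rewrite /adjGc /adjG /adj0 !orbF eqxx. Qed.

Lemma nbr_interface s d y : e (VI s d) y ->
  [/\ d \in s, s \in C & [\/ y = VX d, exists b, y = hub b s | exists i, y = VPI i]].
Proof.
case: y => [a|s' d'|s'|s'|s'|s'||i]; rewrite /adjGc /adjG /adj0 ?orbF ?orFb //.
- by case/and3P => /eqP -> -> ->; split => //; apply: Or31.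
- by case/and3P => /eqP -> -> ->; split => //; apply: Or32; exists true.
- by case/and3P => /eqP -> -> ->; split => //; apply: Or32; exists false.
- by case/and3P => -> -> _; split => //; apply: Or33; exists i.
Qed.

Lemma nbr_hub b s y : e (hub b s) y -> s \in C.
Proof.
case: b; case: y => [a|s' d'|s'|s'|s'|s'||i];
  rewrite /hub /adjGc /adjG /adj0 ?orbF ?orFb //.
all: first [by case/and3P | by case/andP | by case/andP => /eqP ->].
Qed.

Lemma nbr_pendant b s y : e (pendant b s) y -> y = hub b s.
Proof.
case: b; case: y => [a|s' d'|s'|s'|s'|s'||i];
  rewrite /hub /pendant /adjGc /adjG /adj0 ?orbF ?orFb //.
all: by case/andP => /eqP ->.
Qed.

Lemma nbr_pi i y : e (VPI i) y ->
  [\/ y = VP, exists j, y = VPI j | exists s d, y = VI s d].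
Proof.
case: y => [a|s d|s|s|s|s||j]; rewrite /adjGc /adjG /adj0 ?orbF ?orFb // => _.
- by apply: Or33; exists s, d.
- exact: Or31.
- by apply: Or32; exists j.
Qed.

Lemma nbr_x a y : e (VX a) y -> exists s, y = VI s a.
Proof.
case: y => [a'|s d|s|s|s|s||i]; rewrite /adjGc /adjG /adj0 ?orbF ?orFb //.
by case/and3P => /eqP -> _ _; exists s.
Qed.

Definition wt (x : V) : nat :=
  match x with
  | Vx _ | Vu _ | Vw _ | Vpi _ => 2
  | Vint _ _ | Vu' _ | Vw' _ | Vp => 1
  end.

Lemma adj_wt x y : e x y -> 3 <= wt x + wt y.
Proof.
case: x => [a|s d|s|s|s|s||i]; case: y => [a'|s' d'|s'|s'|s'|s'||i'];
  rewrite /adjGc /adjG /adj0 ?orbF ?orFb //.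
Qed.

Definition vtx_code : Type := ('I_n + ({set 'I_n} * 'I_n)) +
  ((({set 'I_n} + {set 'I_n}) + ({set 'I_n} + {set 'I_n})) + ('I_1 + 'I_t)).

Definition vtx_decode (k : vtx_code) : V :=
  match k with
  | inl (inl a) => VX a
  | inl (inr (s, d)) => VI s d
  | inr (inl (inl (inl s))) => VU s
  | inr (inl (inl (inr s))) => VW s
  | inr (inl (inr (inl s))) => VU' s
  | inr (inl (inr (inr s))) => VW' s
  | inr (inr (inl _)) => VP
  | inr (inr (inr i)) => VPI i
  end.

Definition vtx_encode (x : V) : vtx_code :=
  match x with
  | Vx a => inl (inl a)
  | Vint s d => inl (inr (s, d))
  | Vu s => inr (inl (inl (inl s)))
  | Vw s => inr (inl (inl (inr s)))
  | Vu' s => inr (inl (inr (inl s)))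
  | Vw' s => inr (inl (inr (inr s)))
  | Vp => inr (inr (inl ord0))
  | Vpi i => inr (inr (inr i))
  end.

Lemma vtx_decodeK : cancel vtx_decode vtx_encode.
Proof. by case=> [[a|[s d]]|[[[s|s]|[s|s]]|[o|i]]] //=; rewrite (ord1 o). Qed.

Lemma vtx_encodeK : cancel vtx_encode vtx_decode.
Proof. by case. Qed.

Lemma sum_vtx (F : V -> nat) : \sum_x F x =
  \sum_a F (VX a) +
  \sum_s (\sum_d F (VI s d) + F (VU s) + F (VW s) + F (VU' s) + F (VW' s)) +
  (F VP + \sum_i F (VPI i)).
Proof.
rewrite (reindex vtx_decode); last first.
  by apply: onW_bij; exists vtx_encode; [exact: vtx_decodeK | exact: vtx_encodeK].
rewrite !big_sumType big_ord1 !big_split /=.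
have -> : \sum_(p : {set 'I_n} * 'I_n) F (vtx_decode (inl (inr p))) =
          \sum_s \sum_d F (VI s d) by rewrite pair_bigA; apply: eq_bigr => -[s d].
by rewrite !addnA.
Qed.

Section Matching.
Variable M : {set {set V}}.
Hypothesis HM : acyclic_matching e M.
Hypothesis HS3 : forall (i : 'I_t) (s : {set 'I_n}), s \in S i -> #|s| = 3.
Local Notation U := (cover M).
Local Notation mate := (matched M).
Local Notation mate_adj := (matched_adj adjGc_irr adjGc_sym HM).
Local Notation mate_uniq := (matched_uniq adjGc_irr adjGc_sym HM).
Local Notation covered_mate := (covered_matched HM).
Local Notation triangle := (no_triangle adjGc_irr HM).
Local Notation square := (no_square adjGc_irr HM).

Lemma cardC s : s \in C -> #|s| = 3.
Proof. by case/bigcupP => i _ /HS3. Qed.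

Lemma interface_covered s d : VI s d \in U -> (d \in s) && (s \in C).
Proof. by case/covered_mate => y /mate_adj /nbr_interface [-> ->]. Qed.

Lemma hub_covered b s : hub b s \in U -> s \in C.
Proof. by case/covered_mate => y /mate_adj /nbr_hub. Qed.

Lemma pendant_covered b s : pendant b s \in U -> mate (hub b s) (pendant b s).
Proof.
case/covered_mate => y hy.
by rewrite matched_sym -(nbr_pendant (mate_adj hy)).
Qed.

Lemma pendant_hub b s : pendant b s \in U -> hub b s \in U.
Proof. by move/pendant_covered/matched_covered. Qed.

Definition covered_interfaces (s : {set 'I_n}) : {set 'I_n} := [set d | VI s d \in U].

Lemma covered_interfaces_le3 s : s \in C -> #|covered_interfaces s| <= 3.
Proof.
move=> sC; rewrite -[X in _ <= X](cardC sC); apply/subset_leq_card/subsetP => d.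
by rewrite inE => /interface_covered /andP[].
Qed.

(** Both hubs and a covered interface vertex would form a triangle. *)
Lemma hubs_exclusive s d : VI s d \in U -> ~~ ((VU s \in U) && (VW s \in U)).
Proof.
move=> dU; apply/negP => /andP[uU wU]; have /andP[ds sC] := interface_covered dU.
apply: (triangle uU wU dU); first by rewrite adj_hubs.
- by have := adj_hub_interface false s d; rewrite ds sC.
- by rewrite adjGc_sym; have := adj_hub_interface true s d; rewrite ds sC.
Qed.

(** If an interface vertex u_{jd} is matched to some p_i while a hub of its
    gadget is covered, no other interface vertex of the gadget is covered:
    it would close the 4-cycle p_i u_{jd} hub u_{jd'}. *)
Lemma pi_mate_isolates b s d i :
  mate (VI s d) (VPI i) -> hub b s \in U -> #|covered_interfaces s| <= 1.
Proof.
move=> hm hb; rewrite -[X in _ <= X](cards1 d); apply/subset_leq_card/subsetP => d'.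
rewrite !inE => d'U; apply/negPn/negP => ndd.
have := mate_adj hm; rewrite adjGc_sym adj_pi_interface => /and3P[ds sC sSi].
have /andP[d's _] := interface_covered d'U.
have piU : VPI i \in U by apply: (@matched_covered _ _ _ (VI s d)); rewrite matched_sym.
apply: (square piU (matched_covered hm) hb d'U).
- by case: (b).
- by apply: contraNneq ndd => -[->].
- by rewrite adj_pi_interface ds sC sSi.
- by rewrite adjGc_sym adj_hub_interface ds sC.
- by rewrite adj_hub_interface d's sC.
- by rewrite adjGc_sym adj_pi_interface d's sC sSi.
Qed.

Definition saturated (s : {set 'I_n}) : bool :=
  [forall d, (d \in s) ==> mate (VI s d) (VX d)] && ((VU s \in U) || (VW s \in U)).

Lemma unmatched_interface b s d :
  hub (~~ b) s \notin U -> mate (hub b s) (pendant b s) ->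
  d \in s -> ~~ mate (VI s d) (VX d) -> #|covered_interfaces s| <= 2.
Proof.
move=> nb hm ds nx; have hb := matched_covered hm; have sC := hub_covered hb.
have [dU|dnU] := boolP (VI s d \in U); last first.
  have E2 : #|s :\ d| = 2 by have := cardsD1 d s; rewrite ds (cardC sC) /=; lia.
  rewrite -[X in _ <= X]E2; apply/subset_leq_card/subsetP => d'; rewrite !inE => d'U.
  rewrite (proj1 (andP (interface_covered d'U))) andbT.
  by apply: contraNneq dnU => <-.
have [y hy] := covered_mate dU.
have [_ _ [Ey|[b' Ey]|[i Ey]]] := nbr_interface (mate_adj hy); subst y.
- by rewrite hy in nx.
- rewrite matched_sym in hy.
  have [Eb|Eb] : b' = b \/ b' = ~~ b by case: (b) (b') => -[]; [left|right|right|left].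
  + by subst b'; have := mate_uniq hy hm; case: (b).
  + by subst b'; rewrite (matched_covered hy) in nb.
- exact: leq_trans (pi_mate_isolates hy hb) _.
Qed.

Definition cw (x : V) : nat := if x \in U then wt x else 0.

Definition gadget_wt (s : {set 'I_n}) : nat :=
  \sum_d cw (VI s d) + cw (VU s) + cw (VW s) + cw (VU' s) + cw (VW' s).

Lemma gadget_wtE s : gadget_wt s = #|covered_interfaces s| +
  2 * (VU s \in U) + 2 * (VW s \in U) + (VU' s \in U) + (VW' s \in U).
Proof.
rewrite /gadget_wt /cw -sum1_card [in RHS]big_mkcond /=.
congr (_ + _ + _ + _ + _); try by case: ifP.
by apply: eq_bigr => d _; rewrite inE; case: ifP.
Qed.

Lemma gadget_wt_side s : ~~ ((VU s \in U) && (VW s \in U)) ->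
  exists b, hub (~~ b) s \notin U /\
    gadget_wt s = #|covered_interfaces s| + 2 * (hub b s \in U) + (pendant b s \in U).
Proof.
move=> not_both; exists (VU s \in U); rewrite gadget_wtE.
case: (boolP (VU s \in U)) => uU /=; move: not_both; rewrite uU /= => wnU.
- have w'nU : VW' s \notin U by apply: contra wnU => /(@pendant_hub false).
  by rewrite (negbTE wnU) (negbTE w'nU) !addn0.
- have u'nU : VU' s \notin U by apply: contra uU => /(@pendant_hub true).
  by split=> //; rewrite (negbTE u'nU) !addn0; lia.
Qed.

Lemma gadget_wt_le s : gadget_wt s <= 6 * (s \in C).
Proof.
have [sC|snC] := boolP (s \in C); last first.
  have [uU|] := boolP (VU s \in U); first by rewrite (hub_covered (b := true) uU) in snC.
  have [wU|] := boolP (VW s \in U); first by rewrite (hub_covered (b := false) wU) in snC.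
  move=> wnU unU; rewrite gadget_wtE (negbTE wnU) (negbTE unU).
  rewrite (negbTE (contra (@pendant_hub true s) unU)).
  rewrite (negbTE (contra (@pendant_hub false s) wnU)) !addn0.
  rewrite leqn0 cards_eq0; apply/eqP/setP => d; rewrite !inE.
  by apply: contraNF snC => /interface_covered /andP[].
have le3 := covered_interfaces_le3 sC.
have [/andP[uU wU]|not_both] := boolP ((VU s \in U) && (VW s \in U)).
  rewrite gadget_wtE uU wU.
  have -> : #|covered_interfaces s| = 0.
    apply/eqP; rewrite cards_eq0; apply/eqP/setP => d; rewrite !inE.
    by apply: contraTF isT => /hubs_exclusive; rewrite uU wU.
  by case: (VU' s \in U); case: (VW' s \in U).
have [b [_ ->]] := gadget_wt_side not_both.
move: le3; rewrite muln1; move: #|covered_interfaces s| => k.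
by case: (hub b s \in U); case: (pendant b s \in U) => /=; lia.
Qed.

Lemma gadget_wt_unsaturated s d :
  VI s d \in U -> ~~ saturated s -> gadget_wt s + 1 <= 6 * (s \in C).
Proof.
move=> dU unsat; have /andP[_ sC] := interface_covered dU.
have le3 := covered_interfaces_le3 sC.
have [b [nb ->]] := gadget_wt_side (hubs_exclusive dU); rewrite sC muln1.
have [bU|bnU] := boolP (hub b s \in U); last first.
  rewrite (negbTE (contra (@pendant_hub b s) bnU)).
  by move: le3; move: #|covered_interfaces s| => k; lia.
have [pU|pnU] := boolP (pendant b s \in U); last first.
  by move: le3; move: #|covered_interfaces s| => k; lia.
have [d' d's nx] : exists2 d', d' \in s & ~~ mate (VI s d') (VX d').
  have hubsU : (VU s \in U) || (VW s \in U) by case: (b) bU => ->; rewrite ?orbT.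
  move: unsat; rewrite /saturated hubsU andbT => /forallPn [d'].
  by rewrite negb_imply => /andP[d's nx]; exists d'.
have := unmatched_interface nb (pendant_covered pU) d's nx.
by move: #|covered_interfaces s| => k; lia.
Qed.

Lemma gadget_wt_pi s d i : mate (VI s d) (VPI i) -> gadget_wt s + 2 <= 6 * (s \in C).
Proof.
move=> hm; have dU := matched_covered hm; have /andP[_ sC] := interface_covered dU.
have le3 := covered_interfaces_le3 sC.
have [b [_ ->]] := gadget_wt_side (hubs_exclusive dU); rewrite sC muln1.
have [bU|bnU] := boolP (hub b s \in U).
  have := pi_mate_isolates hm bU; move: #|covered_interfaces s| => k.
  by case: (pendant b s \in U) => /=; lia.
rewrite (negbTE (contra (@pendant_hub b s) bnU)).
by move: le3; move: #|covered_interfaces s| => k; lia.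
Qed.

Definition covered_pis : {set 'I_t} := [set i | VPI i \in U].

Lemma p_weightE : cw VP + \sum_i cw (VPI i) = (VP \in U) + 2 * #|covered_pis|.
Proof.
congr (_ + _).
rewrite -sum1_card big_distrr [RHS]big_mkcond /=; apply: eq_bigr => i _.
by rewrite inE /cw; case: ifP.
Qed.

(** Three covered p_i would form a triangle. *)
Lemma covered_pis_le2 : #|covered_pis| <= 2.
Proof.
rewrite leqNgt; apply/negP => /card_gt2P [i [j [k [[iU jU kU] [nij njk nki]]]]].
by rewrite !inE in iU jU kU; apply: (triangle iU jU kU); rewrite adj_pi_pi.
Qed.

(** Two covered p_i and p would form a triangle. *)
Lemma p_uncovered : 1 < #|covered_pis| -> VP \notin U.
Proof.
case/card_gt1P => i [j [iU jU nij]]; rewrite !inE in iU jU.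
by apply/negP => pU; apply: (triangle pU iU jU); rewrite ?adj_p_pi ?adj_pi_pi.
Qed.

Definition pp_edge : bool := [exists i, exists j, mate (VPI i) (VPI j)].

Definition pi_interface_edge : bool :=
  [exists s, exists d, exists i, mate (VI s d) (VPI i)].

(** {p} u P weighs at most 3, unless two p_i are covered, in which case the
    mate of one of them is another p_j or an interface vertex. *)
Lemma p_weight_le : cw VP + \sum_i cw (VPI i) <= 3 + pp_edge + pi_interface_edge.
Proof.
rewrite p_weightE; have [two|] := ltnP 1 #|covered_pis|; last first.
  by case: (VP \in U) => /=; move: #|covered_pis| => k; lia.
have /card_gt0P [i] : 0 < #|covered_pis| by apply: ltnW.
rewrite inE => /covered_mate [y hy].
have -> : #|covered_pis| = 2 by apply/eqP; rewrite eqn_leq covered_pis_le2.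
rewrite (negbTE (p_uncovered two)).
have [Ey|[j Ey]|[s [d Ey]]] := nbr_pi (mate_adj hy); subst y.
- by rewrite matched_sym in hy; have := p_uncovered two; rewrite (matched_covered hy).
- suff -> : pp_edge by case: pi_interface_edge.
  by apply/existsP; exists i; apply/existsP; exists j.
- suff -> : pi_interface_edge by case: pp_edge.
  by apply/existsP; exists s; apply/existsP; exists d; apply/existsP; exists i;
     rewrite matched_sym.
Qed.

Lemma p_weight_ge3 : 3 <= cw VP + \sum_i cw (VPI i) -> exists q, VPI q \in U.
Proof.
rewrite p_weightE; have [/card_gt0P [q]|] := boolP (0 < #|covered_pis|).
  by rewrite inE; exists q.
by rewrite -eqn0Ngt => /eqP ->; case: (VP \in U).
Qed.

Definition x_uncovered : bool := [exists a, VX a \notin U].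

Lemma x_weight : \sum_a cw (VX a) + 2 * x_uncovered <= 2 * n.
Proof.
have cw_le a : cw (VX a) <= 2 by rewrite /cw; case: ifP.
have -> : 2 * n = \sum_(a < n) 2 by rewrite big_const_ord iter_addn_0 mulnC.
have [/existsP [a0 a0nU]|_] := boolP x_uncovered; last by rewrite addn0 leq_sum.
apply: (@sum_deficit _ _ _ _ a0) => //; rewrite /cw; case: ifP => // a0U.
by rewrite a0U in a0nU.
Qed.

Lemma sum_gadget_caps : \sum_s 6 * (s \in C) = 6 * #|C|.
Proof.
by rewrite -big_distrr -sum1_card [in RHS]big_mkcond /=; congr (_ * _).
Qed.

Definition unsaturated_gadget : bool :=
  [exists s, exists d, (VI s d \in U) && ~~ saturated s].

Lemma gadgets_wt_unsaturated : \sum_s gadget_wt s + unsaturated_gadget <= 6 * #|C|.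
Proof.
rewrite -sum_gadget_caps.
have [/existsP [s /existsP [d /andP [dU uns]]]|_] := boolP unsaturated_gadget.
  exact: sum_deficit gadget_wt_le (gadget_wt_unsaturated dU uns).
by rewrite addn0 leq_sum // => s _; exact: gadget_wt_le.
Qed.

Lemma gadgets_wt_pi : \sum_s gadget_wt s + 2 * pi_interface_edge <= 6 * #|C|.
Proof.
rewrite -sum_gadget_caps.
have [/existsP [s /existsP [d /existsP [i hm]]]|_] := boolP pi_interface_edge.
  exact: sum_deficit gadget_wt_le (gadget_wt_pi hm).
by rewrite addn0 leq_sum // => s _; exact: gadget_wt_le.
Qed.

Lemma weight_lower : 3 * #|M| + pp_edge <= \sum_x cw x.
Proof.
rewrite /cw -big_mkcond /=.
apply: (matching_weight adjGc_irr adjGc_sym HM) => [x y /adj_wt //|].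
by case/existsP => i /existsP [j hij]; exists (VPI i), (VPI j).
Qed.

Lemma weight_split : \sum_x cw x =
  \sum_a cw (VX a) + \sum_s gadget_wt s + (cw VP + \sum_i cw (VPI i)).
Proof. exact: sum_vtx. Qed.

Lemma tightness : 2 * #|C| + 2 * c + 1 <= #|M| ->
  [/\ exists q, VPI q \in U, forall a, VX a \in U &
      forall s d, VI s d \in U -> saturated s].
Proof.
move=> size_M.
have [wP3 /eqP] : 3 <= cw VP + \sum_i cw (VPI i) /\
                  x_uncovered + unsaturated_gadget = 0.
  have := weight_lower; rewrite weight_split.
  have := x_weight; have := gadgets_wt_unsaturated; have := gadgets_wt_pi.
  have := p_weight_le; move: size_M.
  move: (\sum_a cw (VX a)) (\sum_s gadget_wt s) (cw VP + \sum_i cw (VPI i)).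
  move: #|M| #|C| => k kC wX wG wP; lia.
rewrite addn_eq0 !eqb0 => /andP[all_x all_sat]; split.
- exact: p_weight_ge3.
- by move=> a; apply: contraNT all_x => anU; apply/existsP; exists a.
- move=> s d dU; apply: contraNT all_sat => uns.
  by apply/existsP; exists s; apply/existsP; exists d; rewrite dU.
Qed.

Definition touched : {set {set 'I_n}} := [set s | [exists d, VI s d \in U]].

(** If p_q is covered, every saturated touched gadget belongs to S_q: otherwise
    p_q u_{ja} hub u_{jb} would be a 4-cycle. *)
Lemma touched_sub q : VPI q \in U ->
  (forall s d, VI s d \in U -> saturated s) -> touched \subset S q.
Proof.
move=> qU sat; apply/subsetP => s; rewrite inE => /existsP [d dU].
have /andP[/forallP matchX hubsU] := sat s d dU.
have /andP[_ sC] := interface_covered dU.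
have cov x : x \in s -> VI s x \in U.
  by move=> xs; apply: (@matched_covered _ _ _ (VX x)); move: (matchX x); rewrite xs.
have [h hU] : exists h, hub h s \in U by case/orP: hubsU => hU; [exists true | exists false].
apply/negPn/negP => sSq.
have /card_gt1P [a [b [a_s b_s nab]]] : 1 < #|s| by rewrite cardC.
apply: (square qU (cov a a_s) hU (cov b b_s)).
- by case: (h).
- by apply: contraNneq nab => -[->].
- by rewrite adj_pi_interface a_s sC sSq.
- by rewrite adjGc_sym adj_hub_interface a_s sC.
- by rewrite adj_hub_interface b_s sC.
- by rewrite adjGc_sym adj_pi_interface b_s sC sSq.
Qed.

(** If every v_a is covered and touched gadgets are saturated, every a lies
    in exactly one touched gadget: the one whose interface vertex is matched
    to v_a. *)
Lemma touched_exact : (forall a, VX a \in U) ->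
  (forall s d, VI s d \in U -> saturated s) ->
  forall a, #|[set s in touched | a \in s]| = 1.
Proof.
move=> xU sat a; have [y hy] := covered_mate (xU a).
have [s0 Ey] := nbr_x (mate_adj hy); subst y.
rewrite -[RHS](cards1 s0); apply: eq_card => s; rewrite !inE.
apply/andP/eqP => [[/existsP [d dU] a_s]|->].
  have /andP[/forallP matchX _] := sat s d dU.
  have hm : mate (VX a) (VI s a) by rewrite matched_sym; move: (matchX a); rewrite a_s.
  by have := mate_uniq hm hy => -[].
have s0aU : VI s0 a \in U by rewrite matched_sym in hy; exact: matched_covered hy.
by have /andP[a_s0 _] := interface_covered s0aU; split => //; apply/existsP; exists a.
Qed.

End Matching.
End Construction.

Theorem lemma18 (c t m : nat) (S : 'I_t -> {set {set 'I_(3 * c)}})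
  (HS3 : forall (i : 'I_t) (s : {set 'I_(3 * c)}), s \in S i -> #|s| = 3)
  (Hm : forall i : 'I_t, #|S i| = m)
  (Hdist : injective S)
  (M : {set {set vtx (3 * c) t}})
  (HM : acyclic_matching (adjGc S) M)
  (Hsize : 2 * #|Cset S| + 2 * c + 1 <= #|M|) :
  exists q : 'I_t, exact_cover_yes (S q).
Proof.
have [[q qU] xU sat] := tightness HM HS3 Hsize.
exists q, (touched M); split; first exact: (touched_sub (c := c) HM HS3 qU sat).
exact: (touched_exact (c := c) HM xU sat).
Qed.
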